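(* In the setting of the context, assume (A2), (A2') and (A3). Then for every $j\in\{1,\dots,p\}$, $$\big|\,\|R\|_{\mathcal{G}_j,2}-\|\alpha\|_{\mathcal{G}_j,2}\big|^2\le 4M^2v_n\,r(\mathcal{G}_j)+2(1+\nu)\,\|P_{V_{\mathcal{G}_j}}W\|_2^2.$$
   Context: Model $Y=\tilde X\alpha+W$ with $\tilde X\in\mathbb{R}^{n\times k}$, $\alpha\in\mathbb{R}^k$, $W\in\mathbb{R}^n$ a noise vector with i.i.d. $\mathcal{N}(0,\sigma^2)$ entries. $\mathcal{G}_1,\dots,\mathcal{G}_p$ is a partition of $\{1,\dots,k\}$, $t_j=\#\mathcal{G}_j$, $t^*=\max_j t_j$; each index $\ell$ is written $\ell=(j,t)$ with $j$ its group and $t\in\{1,\dots,t_j\}$ its rank inside $\mathcal{G}_j$. $R_\ell=\sum_{i=1}^n Y_i\tilde X_{i\ell}$. Norms: $\|u\|_{\mathcal{I},1}=\sum_{\ell\in\mathcal{I}}|u_\ell|$, $\|u\|_{\mathcal{I},2}^2=\sum_{\ell\in\mathcal{I}}u_\ell^2$. $\Gamma=\tilde X^t\tilde X$; $V_{\mathcal{I}}$ is the span of the columns of $\tilde X$ indexed by $\mathcal{I}$ and $P_{V_{\mathcal{I}}}$ the orthogonal projection onto it. $\gamma_{BT}=\sup\{|\Gamma_{(j,t)(j',t')}|: t\neq t'\}$, $\gamma_{BG}=\sup\{|\Gamma_{(j,t)(j',t)}|: j\ne j'\}$; $r(\mathcal{I})=\#(\mathcal{I})\gamma_{BT}^2+\#\{j:\exists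 t,(j,t)\in\mathcal{I}\}\gamma_{BG}^2$; $\tau^*=t^*\gamma_{BT}+\gamma_{BG}$. Assumptions: (A2) $\Gamma_{\ell\ell}=1$ for all $\ell$; (A2') $\tau^*\le\nu$ for a fixed $\nu\in(0,1)$; (A3) there exist $q\in(0,1]$, $M>0$ and $v_n>0$ with $\sum_{j=1}^p\|\alpha\|_{\mathcal{G}_j,1}^q\le M^q v_n^{q/2}$. *)

From HB Require Import structures.
From mathcomp Require Import all_boot all_order all_algebra.
From mathcomp Require Import all_classical all_reals.
From mathcomp Require Import exp.
Set Implicit Arguments. Unset Strict Implicit. Unset Printing Implicit Defensive.
Import Order.TTheory GRing.Theory Num.Theory.
Local Open Scope ring_scope.

Section Defs.
Variables (R : realType) (n k p : nat).

Definition grp (g : 'I_k -> 'I_p) (j : 'I_p) : {set 'I_k} := [set l | g l == j].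

Definition tstar (g : 'I_k -> 'I_p) : nat := \max_(j : 'I_p) #|grp g j|.

Definition Gram (X : 'M[R]_(n, k)) : 'M[R]_k := X^T *m X.

(* gamma_BT = sup{|Gamma_(j,t)(j',t')| : t <> t'} (0 if the set is empty) *)
Definition gammaBT (X : 'M[R]_(n, k)) (rk : 'I_k -> nat) : R :=
  \big[Num.max/0]_(l : 'I_k) \big[Num.max/0]_(l' : 'I_k | rk l != rk l')
     `|Gram X l l'|.

(* gamma_BG = sup{|Gamma_(j,t)(j',t)| : j <> j'} (0 if the set is empty) *)
Definition gammaBG (X : 'M[R]_(n, k)) (g : 'I_k -> 'I_p) (rk : 'I_k -> nat) : R :=
  \big[Num.max/0]_(l : 'I_k) \big[Num.max/0]_(l' : 'I_k | (rk l == rk l') && (g l != g l'))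
     `|Gram X l l'|.

Definition rI (X : 'M[R]_(n, k)) (g : 'I_k -> 'I_p) (rk : 'I_k -> nat)
    (I : {set 'I_k}) : R :=
  (#|I|%:R * gammaBT X rk ^+ 2 + #|[set j | [exists l in I, g l == j]]|%:R * gammaBG X g rk ^+ 2).

Definition norm1I (u : 'cV[R]_k) (I : {set 'I_k}) : R := \sum_(l in I) `|u l 0|.
Definition norm2I (u : 'cV[R]_k) (I : {set 'I_k}) : R := Num.sqrt (\sum_(l in I) u l 0 ^+ 2).

Definition sqnorm (w : 'cV[R]_n) : R := \sum_(i < n) w i 0 ^+ 2.

(* matrix whose row space is V_I = span of the columns of X indexed by I *)
Definition colsI (X : 'M[R]_(n, k)) (I : {set 'I_k}) : 'M[R]_(k, n) :=
  \matrix_(l < k) (if l \in I then (col l X)^T else 0).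

Definition is_orth_proj (X : 'M[R]_(n, k)) (I : {set 'I_k}) (w pw : 'cV[R]_n) : Prop :=
  (pw^T <= colsI X I)%MS /\
  forall v : 'rV[R]_n, (v <= colsI X I)%MS -> v *m (w - pw) = 0.

Definition Rstat (X : 'M[R]_(n, k)) (Y : 'cV[R]_n) : 'cV[R]_k := X^T *m Y.

End Defs.

From HB Require Import structures.
From mathcomp Require Import all_boot all_order all_algebra.
From mathcomp Require Import all_classical all_reals.
From mathcomp Require Import exp.
From mathcomp Require Import ring lra.
Import Order.TTheory GRing.Theory Num.Theory.
Local Open Scope ring_scope.

(* On a block [G = G_j] we have [R_l - alpha_l = ((Gamma - I) alpha)_l + (X^T P W)_l],
   the noise only seeing its projection onto [V_G]; by the reverse triangle
   inequality it suffices to bound the squared l2 norms of the two parts on [G].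
   The noise part is controlled by Gershgorin: indices of one group have
   distinct ranks, so the Gram block on [G] has unit diagonal and off-diagonal
   entries at most [gamma_BT], hence norm at most [1 + t_j gamma_BT <= 1 + nu].
   The bias at [l] is at most [gamma_BT |alpha|_1] plus [gamma_BG] times the l1
   mass of [alpha] on the rank class of [l]; as a group meets each rank class
   at most once, its square sums to [2 |alpha|_1^2 (t_j gamma_BT^2 + gamma_BG^2)].
   Finally [|alpha|_1^2 <= M^2 v_n] follows from (A3) by subadditivity of
   [x |-> x^q] for [q <= 1]. *)

Section RealInequalities.
Context {R : realType}.

Lemma cauchy_schwarz_sum {I : finType} (P : pred I) (a b : I -> R) :
  (\sum_(i | P i) a i * b i) ^+ 2 <=
  (\sum_(i | P i) a i ^+ 2) * (\sum_(i | P i) b i ^+ 2).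
Proof.
set A := \sum_(i | P i) a i ^+ 2; set B := \sum_(i | P i) a i * b i.
set C := \sum_(i | P i) b i ^+ 2.
have A0 : 0 <= A by apply: sumr_ge0 => i _; exact: sqr_ge0.
have C0 : 0 <= C by apply: sumr_ge0 => i _; exact: sqr_ge0.
have [A_eq0|A_neq0] := eqVneq A 0.
  have a0 i : P i -> a i = 0.
    move=> Pi; apply/eqP; rewrite -sqrf_eq0; apply/eqP.
    by move: i Pi; apply/psumr_eq0P => // i _; exact: sqr_ge0.
  rewrite /B big1 => [|i Pi]; last by rewrite a0 ?mul0r.
  by rewrite expr0n mulr_ge0.
have lagrange : \sum_(i | P i) (A * b i - B * a i) ^+ 2 = A * (A * C - B ^+ 2).
  rewrite (eq_bigr (fun i => A ^+ 2 * b i ^+ 2 - 2 * A * B * (a i * b i)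
             + B ^+ 2 * a i ^+ 2)); last by move=> i _; ring.
  by rewrite !big_split /= sumrN -!mulr_sumr -/A -/B -/C; ring.
have : 0 <= A * (A * C - B ^+ 2).
  by rewrite -lagrange; apply: sumr_ge0 => i _; exact: sqr_ge0.
by rewrite pmulr_rge0 ?subr_ge0 // lt_def A_neq0.
Qed.

Lemma sum_sqr_le_sqr_sum {I : finType} (P : pred I) (b : I -> R) :
  (forall i, P i -> 0 <= b i) ->
  \sum_(i | P i) b i ^+ 2 <= (\sum_(i | P i) b i) ^+ 2.
Proof.
move=> b0; rewrite [X in _ <= X]expr2 mulr_suml; apply: ler_sum => i Pi.
rewrite expr2; apply: ler_wpM2l; first exact: b0.
by rewrite (bigD1 i) //= lerDl; apply: sumr_ge0 => j /andP[Pj _]; exact: b0.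
Qed.

Lemma sqr_sub_sqrt_le (A B C : R) : 0 <= A -> 0 <= C -> B ^+ 2 <= A * C ->
  `|Num.sqrt A - Num.sqrt C| ^+ 2 <= A + C - 2 * B.
Proof.
move=> A0 C0 BAC; rewrite real_normK ?num_real //.
have a2 := sqr_sqrtr A0; have c2 := sqr_sqrtr C0.
have a0 := sqrtr_ge0 A; have c0 := sqrtr_ge0 C.
set a := Num.sqrt A in a2 a0 *; set c := Num.sqrt C in c2 c0 *.
rewrite -a2 -c2 in BAC *.
have ac0 : 0 <= a * c by rewrite mulr_ge0.
have : B <= a * c by nra.
nra.
Qed.

Lemma norm2I_sub_sqr_le {k} (u v : 'cV[R]_k) (G : {set 'I_k}) :
  `|norm2I u G - norm2I v G| ^+ 2 <= \sum_(l in G) (u l 0 - v l 0) ^+ 2.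
Proof.
have -> : \sum_(l in G) (u l 0 - v l 0) ^+ 2 =
    \sum_(l in G) u l 0 ^+ 2 + \sum_(l in G) v l 0 ^+ 2
    - 2 * \sum_(l in G) u l 0 * v l 0.
  by rewrite mulr_sumr -big_split -sumrB /=; apply: eq_bigr => i _; ring.
apply: sqr_sub_sqrt_le; last exact: cauchy_schwarz_sum.
  by apply: sumr_ge0 => i _; exact: sqr_ge0.
by apply: sumr_ge0 => i _; exact: sqr_ge0.
Qed.

(* Concavity of [x |-> x `^ q] through the origin: [c `^ q * (x / c) <= x `^ q]
   for [0 <= x <= c], applied to [x = a] and [x = b] with [c = a + b]. *)
Lemma powRD_le {a b q : R} : 0 <= a -> 0 <= b -> 0 < q -> q <= 1 ->
  powR (a + b) q <= powR a q + powR b q.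
Proof.
move=> a0 b0 q0 q1; set c := a + b.
have [c0|c_neq0] := eqVneq c 0.
  by rewrite c0 powR0 ?gt_eqF // addr_ge0 // powR_ge0.
have c_gt0 : 0 < c by rewrite lt_def c_neq0 addr_ge0.
have chord x : 0 <= x -> x <= c -> powR c q * (x / c) <= powR x q.
  move=> x0 xc.
  have -> : powR x q = powR c q * powR (x / c) q.
    by rewrite -powRM ?divr_ge0 ?(ltW c_gt0) // mulrC divfK.
  rewrite ler_wpM2l ?powR_ge0 //.
  have [->|x_neq0] := eqVneq x 0; first by rewrite mul0r powR_ge0.
  by rewrite ger1_powR // ?divr_gt0 ?ler_pdivrMr ?mul1r // lt_def x_neq0.
have ac : a <= c by rewrite lerDl.
have bc : b <= c by rewrite lerDr.
apply: le_trans (lerD (chord a a0 ac) (chord b b0 bc)).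
by rewrite -mulrDr -mulrDl divff // mulr1.
Qed.

Lemma powR_sum_le {I : finType} {P : pred I} {a : I -> R} {q : R} :
  (forall i, P i -> 0 <= a i) -> 0 < q -> q <= 1 ->
  powR (\sum_(i | P i) a i) q <= \sum_(i | P i) powR (a i) q.
Proof.
move=> a0 q0 q1.
suff [] : 0 <= \sum_(i | P i) a i /\
          powR (\sum_(i | P i) a i) q <= \sum_(i | P i) powR (a i) q by [].
apply: (big_ind2 (fun x y => 0 <= x /\ powR x q <= y)).
- by rewrite powR0 ?gt_eqF.
- move=> x1 x2 y1 y2 [x10 le1] [x20 le2]; split; first exact: addr_ge0.
  exact: le_trans (powRD_le x10 x20 q0 q1) (lerD le1 le2).
- by move=> i Pi; split; [exact: a0 | exact: lexx].
Qed.

Lemma sqr_sum_le_of_powR_sum_le (I : finType) (a : I -> R) (q M v : R) :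
  (forall i, 0 <= a i) -> 0 < q -> q <= 1 -> 0 < M -> 0 < v ->
  \sum_i powR (a i) q <= powR M q * powR v (q / 2) ->
  (\sum_i a i) ^+ 2 <= M ^+ 2 * v.
Proof.
move=> a0 q0 q1 M0 v0 sum_le.
set S := \sum_i a i.
have S0 : 0 <= S by apply: sumr_ge0 => i _; exact: a0.
have Mv0 : 0 <= M * Num.sqrt v by rewrite mulr_ge0 ?(ltW M0) ?sqrtr_ge0.
have powS_le : powR S q <= powR (M * Num.sqrt v) q.
  apply: le_trans (powR_sum_le (fun i _ => a0 i) q0 q1) _.
  rewrite powRM ?(ltW M0) ?sqrtr_ge0 // -powR12_sqrt ?(ltW v0) // -powRrM.
  by rewrite [_^-1 * q]mulrC.
have S_le : S <= M * Num.sqrt v.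
  rewrite leNgt; apply/negP => lt_MS; move: powS_le.
  by rewrite leNgt (gt0_ltr_powR q0) ?nnegrE.
by rewrite -(sqr_sqrtr (ltW v0)) -exprMn ler_sqr ?nnegrE.
Qed.

Lemma mx_quad_form_le {k} {A : 'M[R]_k} {G : {set 'I_k}} (s : 'I_k -> R) {gam : R} :
  (forall l, l \in G -> A l l = 1) ->
  (forall l l', l \in G -> l' \in G -> l != l' -> `|A l l'| <= gam) ->
  0 <= gam ->
  \sum_(l in G) \sum_(l' in G) s l * s l' * A l l'
    <= (1 + #|G|%:R * gam) * \sum_(l in G) s l ^+ 2.
Proof.
move=> A_diag A_off gam0; set T := \sum_(l in G) s l ^+ 2.
have entry_le l l' : l \in G -> l' \in G ->
    s l * s l' * A l l' <= (l == l')%:R * s l ^+ 2 + gam / 2 * (s l ^+ 2 + s l' ^+ 2).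
  move=> lG l'G; have := sqr_ge0 (`|s l| - `|s l'|).
  rewrite -[s l ^+ 2]real_normK ?num_real // -[s l' ^+ 2]real_normK ?num_real //.
  have [<-|neq_ll'] := eqVneq l l'.
    rewrite A_diag // mulr1 mul1r -expr2 real_normK ?num_real //.
    have := sqr_ge0 (s l); nra.
  rewrite mul0r add0r => sqr_diff_ge0.
  apply: le_trans (ler_norm _) _; rewrite !normrM.
  have : `|s l| * `|s l'| * `|A l l'| <= `|s l| * `|s l'| * gam.
    by rewrite ler_wpM2l ?mulr_ge0 ?A_off.
  nra.
apply: le_trans (ler_sum _ (fun l lG => ler_sum _ (fun l' l'G => entry_le l l' lG l'G))) _.
have diag_sum : \sum_(l in G) \sum_(l' in G) (l == l')%:R * s l ^+ 2 = T.
  apply: eq_bigr => l lG; rewrite (bigD1 l) //= eqxx mul1r big1 ?addr0 //.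
  by move=> l' /andP[_ neq_l'l]; rewrite eq_sym (negbTE neq_l'l) mul0r.
have off_sum :
    \sum_(l in G) \sum_(l' in G) gam / 2 * (s l ^+ 2 + s l' ^+ 2) = gam * #|G|%:R * T.
  under eq_bigr do rewrite -mulr_sumr big_split /= sumr_const -[_ *+ #|G|]mulr_natl.
  rewrite -mulr_sumr big_split /= -mulr_sumr -/T sumr_const -[_ *+ #|G|]mulr_natl.
  by field.
rewrite (eq_bigr _ (fun l _ => big_split _ _ _ _ _)) big_split /= diag_sum off_sum.
lra.
Qed.

End RealInequalities.

Section GramMatrix.
Context {R : realType} {n k : nat} {X : 'M[R]_(n, k)}.

Lemma trmx_mulE (u : 'cV[R]_n) l : (X^T *m u) l 0 = \sum_i X i l * u i 0.
Proof. by rewrite mxE; apply: eq_bigr => i _; rewrite mxE. Qed.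

Lemma sum_sqr_trmx_mul_le {G : {set 'I_k}} (u : 'cV[R]_n) {gam nu : R} :
  (forall l, l \in G -> Gram X l l = 1) ->
  (forall l l', l \in G -> l' \in G -> l != l' -> `|Gram X l l'| <= gam) ->
  0 <= gam -> #|G|%:R * gam <= nu ->
  \sum_(l in G) ((X^T *m u) l 0) ^+ 2 <= (1 + nu) * sqnorm u.
Proof.
move=> X_diag X_off gam0 le_nu.
set s := fun l => (X^T *m u) l 0; set T := \sum_(l in G) s l ^+ 2.
pose z i := \sum_(l in G) s l * X i l.
have T0 : 0 <= T by apply: sumr_ge0 => l _; exact: sqr_ge0.
have nu0 : 0 <= nu by apply: le_trans le_nu; rewrite mulr_ge0.
(* With [z = X_G s], [T = <z, u>] while [|z|^2] is the Gram quadratic form at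
   [s], so Cauchy-Schwarz gives [T^2 <= (1 + nu) T |u|^2]. *)
have T_eq : T = \sum_i z i * u i 0.
  rewrite /T; under eq_bigr do rewrite expr2 {2}/s trmx_mulE mulr_sumr.
  rewrite exchange_big /=; apply: eq_bigr => i _.
  by rewrite mulr_suml; apply: eq_bigr => l _; rewrite mulrA.
have z_sqr : \sum_i z i ^+ 2 = \sum_(l in G) \sum_(l' in G) s l * s l' * Gram X l l'.
  under eq_bigr do rewrite expr2 mulr_suml.
  under eq_bigr do under eq_bigr do rewrite mulr_sumr.
  rewrite exchange_big /=; apply: eq_bigr => l _.
  rewrite exchange_big /=; apply: eq_bigr => l' _.
  rewrite /Gram mxE mulr_sumr; apply: eq_bigr => i _; rewrite mxE; ring.
have z_le : \sum_i z i ^+ 2 <= (1 + nu) * T.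
  rewrite z_sqr; apply: le_trans (mx_quad_form_le s X_diag X_off gam0) _.
  by rewrite ler_wpM2r // lerD2l.
have := cauchy_schwarz_sum predT z (fun i => u i 0); rewrite -T_eq -/(sqnorm u).
have U0 : 0 <= sqnorm u by apply: sumr_ge0 => i _; exact: sqr_ge0.
have [->|T_neq0] := eqVneq T 0; first by rewrite mulr_ge0 ?addr_ge0.
have T_gt0 : 0 < T by rewrite lt_def T_neq0.
have := ler_wpM2r U0 z_le; nra.
Qed.

Lemma orth_proj_trmx_mulE {G : {set 'I_k}} {w pw : 'cV[R]_n} {l} :
  is_orth_proj X G w pw -> l \in G -> (X^T *m w) l 0 = (X^T *m pw) l 0.
Proof.
move=> [_ orth] lG.
have col_sub : ((col l X)^T <= colsI X G)%MS.
  by rewrite -(_ : row l (colsI X G) = (col l X)^T) ?row_sub // /colsI rowK lG.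
have := congr1 (fun A : 'M[R]_1 => A 0 0) (orth _ col_sub).
rewrite mxE [RHS]mxE => orth_l.
apply/eqP; rewrite -subr_eq0 -orth_l !trmx_mulE -sumrB.
by apply/eqP/eq_bigr => i _; rewrite !mxE; ring.
Qed.

Lemma Rstat_sub_grpE {G : {set 'I_k}} {W pw : 'cV[R]_n} (alpha : 'cV[R]_k) {l} :
  is_orth_proj X G W pw -> l \in G ->
  Rstat X (X *m alpha + W) l 0 - alpha l 0
    = ((Gram X *m alpha) l 0 - alpha l 0) + (X^T *m pw) l 0.
Proof.
move=> proj_W lG; rewrite -(orth_proj_trmx_mulE proj_W lG) /Rstat mulmxDr mulmxA mxE.
by rewrite /Gram; ring.
Qed.

End GramMatrix.

Section BlockCoherence.
Context {R : realType} {n k p : nat} {X : 'M[R]_(n, k)}.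
Context {g : 'I_k -> 'I_p} {rk : 'I_k -> nat}.
Hypothesis rk_inj : forall l l', g l = g l' -> rk l = rk l' -> l = l'.
Hypothesis X_diag : forall l, Gram X l l = 1.
Implicit Types (alpha : 'cV[R]_k) (l : 'I_k) (j : 'I_p).

Lemma sum_norm1I_grp alpha :
  \sum_(j < p) norm1I alpha (grp g j) = \sum_l `|alpha l 0|.
Proof.
rewrite [RHS](partition_big g xpredT) //=; apply: eq_bigr => j _.
by apply: eq_bigl => l; rewrite inE.
Qed.

Local Notation gT := (gammaBT X rk).
Local Notation gG := (gammaBG X g rk).

Lemma gammaBT_ge0 : 0 <= gT.
Proof. exact: bigmax_ge_id. Qed.

Lemma gammaBG_ge0 : 0 <= gG.
Proof. exact: bigmax_ge_id. Qed.

Lemma Gram_le_gammaBT l l' : rk l != rk l' -> `|Gram X l l'| <= gT.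
Proof.
move=> neq_rk; apply: le_trans (le_bigmax _ _ l).
exact: (le_bigmax_cond _ (fun l' => `|Gram X l l'|) neq_rk).
Qed.

Lemma Gram_le_gammaBG l l' : rk l = rk l' -> g l != g l' -> `|Gram X l l'| <= gG.
Proof.
move=> /eqP eq_rk neq_g; apply: le_trans (le_bigmax _ _ l).
by apply: (le_bigmax_cond _ (fun l' => `|Gram X l l'|)); rewrite eq_rk.
Qed.

Lemma Gram_grp_le_gammaBT j l l' :
  l \in grp g j -> l' \in grp g j -> l != l' -> `|Gram X l l'| <= gT.
Proof.
rewrite !inE => /eqP gl /eqP gl' neq_ll'; apply: Gram_le_gammaBT.
by apply: contra neq_ll' => /eqP eq_rk; apply/eqP/rk_inj; rewrite ?gl ?gl'.
Qed.

Lemma Gram_offdiag_le l l' : l' != l -> `|Gram X l l'| <= gT + (rk l' == rk l)%:R * gG.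
Proof.
move=> neq_l'l; have [eq_rk|neq_rk] := eqVneq (rk l') (rk l); last first.
  by rewrite mul0r addr0 Gram_le_gammaBT // eq_sym.
have neq_g : g l != g l'.
  by apply: contra neq_l'l => /eqP eq_g; apply/eqP/rk_inj.
by rewrite mul1r (le_trans (Gram_le_gammaBG _ _ (esym eq_rk) neq_g)) // lerDr gammaBT_ge0.
Qed.

Definition rank_mass (alpha : 'cV[R]_k) l : R := \sum_(l' | rk l' == rk l) `|alpha l' 0|.

Lemma rank_mass_ge0 alpha l : 0 <= rank_mass alpha l.
Proof. by apply: sumr_ge0 => l' _; exact: normr_ge0. Qed.

Lemma Gram_mul_sub_le alpha l :
  `|(Gram X *m alpha) l 0 - alpha l 0|
    <= gT * \sum_l' `|alpha l' 0| + gG * rank_mass alpha l.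
Proof.
have -> : (Gram X *m alpha) l 0 - alpha l 0 = \sum_(l' | l' != l) Gram X l l' * alpha l' 0.
  by rewrite mxE (bigD1 l) //= X_diag mul1r addrAC subrr add0r.
apply: le_trans (ler_norm_sum _ _ _) _.
apply: (@le_trans _ _ (\sum_(l' | l' != l) (gT + (rk l' == rk l)%:R * gG) * `|alpha l' 0|)).
  by apply: ler_sum => l' neq_l'l; rewrite normrM ler_wpM2r ?Gram_offdiag_le.
apply: (@le_trans _ _ (\sum_l' (gT + (rk l' == rk l)%:R * gG) * `|alpha l' 0|)).
  by rewrite [leRHS](bigD1 l) //= lerDr mulr_ge0 ?addr_ge0 ?mulr_ge0 ?ler0n
    ?gammaBT_ge0 ?gammaBG_ge0.
rewrite /rank_mass !mulr_sumr [X in _ <= _ + X]big_mkcond -big_split /=.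
by apply: ler_sum => l' _; case: (_ == _); rewrite ?mul1r ?mul0r ?mulr0 ?addr0 ?mulrDl.
Qed.

(* By [rk_inj], a group meets each rank class in at most one index. *)
Lemma sum_rank_mass_grp_le alpha j :
  \sum_(l in grp g j) rank_mass alpha l <= \sum_l `|alpha l 0|.
Proof.
rewrite /rank_mass (exchange_big_dep xpredT) //=; apply: ler_sum => l' _.
set A := [set l in grp g j | rk l' == rk l].
rewrite (eq_bigl [in A]) => [|l]; last by rewrite !inE.
rewrite sumr_const -mulr_natr ler_piMr ?normr_ge0 // lern1.
apply/card_le1_eqP => l1 l2; rewrite !inE => /andP[/eqP g1 /eqP r1] /andP[/eqP g2 /eqP r2].
by apply: rk_inj; rewrite ?g1 ?g2 -?r1 -?r2.
Qed.

Lemma sqr_sum_norm_le_of_powR_grp alpha (q M v : R) :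
  0 < q -> q <= 1 -> 0 < M -> 0 < v ->
  \sum_j powR (norm1I alpha (grp g j)) q <= powR M q * powR v (q / 2) ->
  (\sum_l `|alpha l 0|) ^+ 2 <= M ^+ 2 * v.
Proof.
move=> q0 q1 M0 v0 sum_le; rewrite -sum_norm1I_grp.
apply: sqr_sum_le_of_powR_sum_le sum_le => // j.
by apply: sumr_ge0 => l _; exact: normr_ge0.
Qed.

Lemma card_grp_mul_gammaBT_le j {nu : R} :
  (tstar g)%:R * gT + gG <= nu -> #|grp g j|%:R * gT <= nu.
Proof.
have : #|grp g j|%:R * gT <= (tstar g)%:R * gT.
  by rewrite ler_wpM2r ?gammaBT_ge0 // ler_nat (leq_bigmax (F := fun j => #|grp g j|)).
have := gammaBG_ge0; lra.
Qed.

Lemma rI_ge0 (I : {set 'I_k}) : 0 <= rI X g rk I.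
Proof. by rewrite addr_ge0 // mulr_ge0 ?ler0n ?sqr_ge0. Qed.

Lemma rI_grp_ge {j} : (exists l, g l = j) ->
  #|grp g j|%:R * gT ^+ 2 + gG ^+ 2 <= rI X g rk (grp g j).
Proof.
move=> [l gl]; rewrite /rI lerD2l ler_peMl ?sqr_ge0 // ler1n.
by apply/card_gt0P; exists j; rewrite inE; apply/existsP; exists l; rewrite inE gl eqxx.
Qed.

Lemma sum_sqr_Gram_mul_sub_le alpha {j} : (exists l, g l = j) ->
  \sum_(l in grp g j) ((Gram X *m alpha) l 0 - alpha l 0) ^+ 2
    <= 2 * (\sum_l `|alpha l 0|) ^+ 2 * rI X g rk (grp g j).
Proof.
move=> /rI_grp_ge rI_ge.
set S := \sum_l `|alpha l 0|.
have S0 : 0 <= S by apply: sumr_ge0 => l _; exact: normr_ge0.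
have term_le l : ((Gram X *m alpha) l 0 - alpha l 0) ^+ 2
    <= 2 * gT ^+ 2 * S ^+ 2 + 2 * gG ^+ 2 * rank_mass alpha l ^+ 2.
  have b0 := rank_mass_ge0 alpha l.
  have bnd0 : 0 <= gT * S + gG * rank_mass alpha l.
    by rewrite addr_ge0 ?mulr_ge0 ?gammaBT_ge0 ?gammaBG_ge0.
  rewrite -real_normK ?num_real //.
  have : `|(Gram X *m alpha) l 0 - alpha l 0| ^+ 2
           <= (gT * S + gG * rank_mass alpha l) ^+ 2.
    by rewrite ler_sqr ?nnegrE ?Gram_mul_sub_le.
  have := sqr_ge0 (gT * S - gG * rank_mass alpha l); nra.
have mass_sqr_le : \sum_(l in grp g j) rank_mass alpha l ^+ 2 <= S ^+ 2.
  apply: le_trans (sum_sqr_le_sqr_sum _ _ (fun l _ => rank_mass_ge0 alpha l)) _.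
  by rewrite ler_sqr ?nnegrE ?sum_rank_mass_grp_le ?sumr_ge0 // => l _; exact: rank_mass_ge0.
apply: le_trans (ler_sum _ (fun l _ => term_le l)) _.
rewrite big_split /= sumr_const -mulr_sumr -mulr_natr.
have := sqr_ge0 gG; have := sqr_ge0 S; nra.
Qed.

End BlockCoherence.

Theorem proposition1 (R : realType) (n k p : nat)
    (X : 'M[R]_(n, k)) (alpha : 'cV[R]_k) (W : 'cV[R]_n)
    (g : 'I_k -> 'I_p) (rk : 'I_k -> nat)
    (g_surj : forall j : 'I_p, exists l : 'I_k, g l = j)
    (rk_range : forall l : 'I_k, (1 <= rk l <= #|grp g (g l)|)%N)
    (rk_inj : forall l l' : 'I_k, g l = g l' -> rk l = rk l' -> l = l')
    (nu q M vn : R)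
    (A2 : forall l : 'I_k, Gram X l l = 1)
    (nu_pos : 0 < nu) (nu_lt1 : nu < 1)
    (A2' : (tstar g)%:R * gammaBT X rk + gammaBG X g rk <= nu)
    (q_pos : 0 < q) (q_le1 : q <= 1) (M_pos : 0 < M) (vn_pos : 0 < vn)
    (A3 : \sum_(j < p) powR (norm1I alpha (grp g j)) q
            <= powR M q * powR vn (q / 2)) :
  forall (j : 'I_p) (PW : 'cV[R]_n),
    is_orth_proj X (grp g j) W PW ->
    `|norm2I (Rstat X (X *m alpha + W)) (grp g j) - norm2I alpha (grp g j)| ^+ 2
      <= 4 * M ^+ 2 * vn * rI X g rk (grp g j) + 2 * (1 + nu) * sqnorm PW.
Proof.
move=> j PW proj_W; set G := grp g j.
pose e l := (Gram X *m alpha) l 0 - alpha l 0.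
pose w l := (X^T *m PW) l 0.
have e_le : \sum_(l in G) e l ^+ 2 <= 2 * (M ^+ 2 * vn) * rI X g rk G.
  apply: le_trans (sum_sqr_Gram_mul_sub_le rk_inj A2 alpha (g_surj j)) _.
  rewrite ler_wpM2r ?rI_ge0 // ler_wpM2l //.
  exact: sqr_sum_norm_le_of_powR_grp A3.
have w_le : \sum_(l in G) w l ^+ 2 <= (1 + nu) * sqnorm PW :=
  sum_sqr_trmx_mul_le PW (fun l _ => A2 l) (Gram_grp_le_gammaBT rk_inj j)
    gammaBT_ge0 (card_grp_mul_gammaBT_le j A2').
apply: le_trans (norm2I_sub_sqr_le _ _ _) _.
have R_sub_alpha l : l \in G -> Rstat X (X *m alpha + W) l 0 - alpha l 0 = e l + w l.
  exact: Rstat_sub_grpE.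
under eq_bigr => l lG do rewrite R_sub_alpha //.
apply: (@le_trans _ _ (\sum_(l in G) (2 * e l ^+ 2 + 2 * w l ^+ 2))).
  by apply: ler_sum => l _; have := sqr_ge0 (e l - w l); nra.
rewrite big_split /= -!mulr_sumr; lra.
Qed.
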